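(* Let $G,H,K$ be pro-oligomorphic groups with $G$ split, and let $\Phi:\mathbf{S}(G)\to\mathbf{S}(K)$ and $\Psi:\mathbf{S}(H)\to\mathbf{S}(K)$ be exact functors. Suppose that $\Phi(X)\times\Psi(Y)$ is a transitive $K$-set whenever $X\in\mathbf{S}(G)$ and $Y\in\mathbf{S}(H)$ are transitive. Let $X$ be a transitive $G$-set, $Y$ a transitive $H$-set, and $Z$ a quotient of the $K$-set $\Phi(X)\times\Psi(Y)$. Then there exist a quotient $X'$ of $X$ and a quotient $Y'$ of $Y$ such that $Z\cong\Phi(X')\times\Psi(Y')$.
   Context: A pro-oligomorphic group is a Hausdorff topological group in which open subgroups form a neighborhood basis of the identity and $U\backslash G/V$ is finite for all open subgroups $U,V$. $\mathbf{S}(G)$ is the category of $G$-sets, i.e. sets with an action having open stabilizers and finitely many orbits, with $G$-equivariant maps; it has finite limits and colimits, computed on underlying sets. A functor between such categories is exact if it commutes with finite limits and finite colimits. $G$ is split if for every pro-oligomorphic $H$, every transitive $(G\times H)$-set is isomorphic to $X\times Y$ with $X$ a transitive $G$-set and $Y$ a transitive $H$-set. A quotient of a $K$-set $W$ is a $K$-set $Z$ together with a surjective $K$-map $W\to Z$. *)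

From HB Require Import structures.
From mathcomp Require Import all_boot all_order all_algebra.
From mathcomp Require Import all_classical topology.
From Stdlib Require List.
Set Implicit Arguments. Unset Strict Implicit. Unset Printing Implicit Defensive.
Local Open Scope classical_set_scope.

(* Raw topological-group data: a topological space with group operations.
   The axioms are imposed separately by [is_pro_oligomorphic]. *)
Record topGrp := TopGrp {
  tg_car : topologicalType;
  tg_mul : tg_car -> tg_car -> tg_car;
  tg_one : tg_car;
  tg_inv : tg_car -> tg_car }.
Coercion tg_car : topGrp >-> topologicalType.

Definition is_subgroup (G : topGrp) (V : set G) : Prop :=
  V (tg_one G) /\ forall x y, V x -> V y -> V (tg_mul x (tg_inv y)).

Definition open_subgroup (G : topGrp) (V : set G) : Prop :=
  open V /\ is_subgroup V.

Definition is_pro_oligomorphic (G : topGrp) : Prop :=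
      (forall x y z : G, tg_mul x (tg_mul y z) = tg_mul (tg_mul x y) z) /\
      (forall x : G, tg_mul (tg_one G) x = x) /\
      (forall x : G, tg_mul (tg_inv x) x = tg_one G) /\
      continuous (fun p : G * G => tg_mul p.1 p.2) /\ continuous (@tg_inv G) /\
      hausdorff_space G /\
      (forall U : set G, nbhs (tg_one G) U ->
         exists V : set G, open_subgroup V /\ V `<=` U) /\
      (forall U V : set G, open_subgroup U -> open_subgroup V ->
         exists s : seq G, forall x : G, exists g, List.In g s /\
           exists u v, U u /\ V v /\ x = tg_mul (tg_mul u g) v).

Definition prod_topGrp (G H : topGrp) : topGrp :=
  @TopGrp (G * H)%type
    (fun p q => (tg_mul p.1 q.1, tg_mul p.2 q.2))
    (tg_one G, tg_one H)
    (fun p => (tg_inv p.1, tg_inv p.2)).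

Record gset (G : topGrp) := GSet {
  gs_car :> Type;
  gs_act : G -> gs_car -> gs_car;
  gs_act1 : forall x, gs_act (tg_one G) x = x;
  gs_actM : forall g h x, gs_act g (gs_act h x) = gs_act (tg_mul g h) x;
  gs_open_stab : forall x, open [set g | gs_act g x = x];
  gs_fin_orbits : exists s : seq gs_car,
      forall x, exists y, List.In y s /\ exists g, x = gs_act g y }.
Arguments gs_act {G} X g x : rename.

(* Morphisms of S(G): G-equivariant maps. Equality of morphisms is
   pointwise equality of the underlying maps. *)
Record gmap (G : topGrp) (X Y : gset G) := GMap {
  gm_fun :> X -> Y;
  gm_equiv : forall g x, gm_fun (gs_act X g x) = gs_act Y g (gm_fun x) }.

Definition gmap_id (G : topGrp) (X : gset G) : gmap X X :=
  @GMap G X X id (fun g x => erefl).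

Definition gmap_comp (G : topGrp) (X Y Z : gset G) (g : gmap Y Z) (f : gmap X Y)
  : gmap X Z.
Proof.
refine (@GMap G X Z (fun x => g (f x)) _).
by move=> k x; rewrite gm_equiv gm_equiv.
Defined.

Definition transitive_action (A T : Type) (act : A -> T -> T) : Prop :=
  (exists x : T, True) /\ forall x y : T, exists a, act a x = y.

Definition transitive_gset (G : topGrp) (X : gset G) : Prop :=
  transitive_action (gs_act X).

Definition is_terminal (G : topGrp) (T : gset G) : Prop :=
  forall X : gset G, exists f : gmap X T,
    forall f' : gmap X T, forall x, f' x = f x.

Definition is_initial (G : topGrp) (I : gset G) : Prop :=
  forall X : gset G, exists f : gmap I X,
    forall f' : gmap I X, forall x, f' x = f x.

Definition is_pullback (G : topGrp) (X Y Z P : gset G)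
  (f : gmap X Z) (g : gmap Y Z) (p1 : gmap P X) (p2 : gmap P Y) : Prop :=
  (forall p, f (p1 p) = g (p2 p)) /\
  forall (T : gset G) (a : gmap T X) (b : gmap T Y),
    (forall t, f (a t) = g (b t)) ->
    exists u : gmap T P,
      ((forall t, p1 (u t) = a t) /\ (forall t, p2 (u t) = b t)) /\
      forall u' : gmap T P,
        (forall t, p1 (u' t) = a t) -> (forall t, p2 (u' t) = b t) ->
        forall t, u' t = u t.

Definition is_pushout (G : topGrp) (X Y Z Q : gset G)
  (f : gmap Z X) (g : gmap Z Y) (i1 : gmap X Q) (i2 : gmap Y Q) : Prop :=
  (forall z, i1 (f z) = i2 (g z)) /\
  forall (T : gset G) (a : gmap X T) (b : gmap Y T),
    (forall z, a (f z) = b (g z)) ->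
    exists u : gmap Q T,
      ((forall x, u (i1 x) = a x) /\ (forall y, u (i2 y) = b y)) /\
      forall u' : gmap Q T,
        (forall x, u' (i1 x) = a x) -> (forall y, u' (i2 y) = b y) ->
        forall q, u' q = u q.

Record functor (G K : topGrp) := Functor {
  F_obj :> gset G -> gset K;
  F_map : forall X Y : gset G, gmap X Y -> gmap (F_obj X) (F_obj Y);
  F_map_id : forall (X : gset G) x, F_map (gmap_id X) x = x;
  F_map_comp : forall (X Y Z : gset G) (g : gmap Y Z) (f : gmap X Y) x,
      F_map (gmap_comp g f) x = F_map g (F_map f x) }.
Arguments F_map {G K} F {X Y} f : rename.

(* Exact = commutes with finite limits and finite colimits; finite limits
   (resp. colimits) are generated by the terminal object and pullbacks
   (resp. initial object and pushouts). *)
Definition preserves_finite_limits (G K : topGrp) (F : functor G K) : Prop :=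
  (forall T : gset G, is_terminal T -> is_terminal (F T)) /\
  (forall (X Y Z P : gset G) (f : gmap X Z) (g : gmap Y Z)
          (p1 : gmap P X) (p2 : gmap P Y),
     is_pullback f g p1 p2 ->
     is_pullback (F_map F f) (F_map F g) (F_map F p1) (F_map F p2)).

Definition preserves_finite_colimits (G K : topGrp) (F : functor G K) : Prop :=
  (forall I : gset G, is_initial I -> is_initial (F I)) /\
  (forall (X Y Z Q : gset G) (f : gmap Z X) (g : gmap Z Y)
          (i1 : gmap X Q) (i2 : gmap Y Q),
     is_pushout f g i1 i2 ->
     is_pushout (F_map F f) (F_map F g) (F_map F i1) (F_map F i2)).

Definition exact_functor (G K : topGrp) (F : functor G K) : Prop :=
  preserves_finite_limits F /\ preserves_finite_colimits F.

(* Products computed on underlying sets, with diagonal action. *)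
Definition prod_act (K : topGrp) (A B : gset K) (k : K) (p : A * B) : A * B :=
  (gs_act A k p.1, gs_act B k p.2).

Definition prod2_act (G H : topGrp) (X : gset G) (Y : gset H)
  (gh : prod_topGrp G H) (p : X * Y) : X * Y :=
  (gs_act X gh.1 p.1, gs_act Y gh.2 p.2).

Definition split_group (G : topGrp) : Prop :=
  forall H : topGrp, is_pro_oligomorphic H ->
  forall W : gset (prod_topGrp G H), transitive_gset W ->
  exists (X : gset G) (Y : gset H), transitive_gset X /\ transitive_gset Y /\
    exists e : W -> X * Y, bijective e /\
      forall gh w, e (gs_act W gh w) = prod2_act gh (e w).

From mathcomp Require Import all_boot all_order all_algebra.
From mathcomp Require Import all_classical topology.
From Stdlib Require List.
Set Implicit Arguments. Unset Strict Implicit. Unset Printing Implicit Defensive.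
Local Open Scope classical_set_scope.

(* Let E_X be the kernel of [u |-> q (u, -)] on [Phi X] and E_Y that of [v |-> q (-, v)] on
   [Psi Y]. By exactness, [Phi X * Phi X] is covered by the images [Phi O] of the orbitals [O]
   of [X] (the [G]-orbits on [X * X]), and likewise for [Y]. For orbitals [O] of [X] and [O'] of
   [Y] the [K]-set [Phi O * Psi O'] is transitive, so the equivariant map [q] identifies either
   all or none of the pairs it contains. Hence E_X is the kernel of [Phi (X -> X')], where [X']
   is the quotient of [X] by the orbitals whose image lies in E_X, and similarly for [Y']. The
   same blocks form a [(G * H)]-invariant equivalence on [X * Y]; as [G] is split its quotient
   is a product, so [q (u, v) = q (u', v')] forces E_X u u' and E_Y v v'. Thus [q] and
   [Phi X * Psi Y -> Phi X' * Psi Y'] have the same kernel and [Z = Phi X' * Psi Y']. *)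

Lemma proj1_sig_inj (T : Type) (P : T -> Prop) : injective (@proj1_sig T P).
Proof. by case=> a pa [b pb] /= eab; subst b; rewrite (Prop_irrelevance pa pb). Qed.

Definition surjective (A B : Type) (f : A -> B) := forall y, exists x, f x = y.

Definition seq_sig (T : Type) (P : T -> Prop) (s : seq T) : seq {x | P x} :=
  List.flat_map (fun y => if pselect (P y) is left h then [:: exist P y h] else [::]) s.

Lemma size_seq_sig (T : Type) (P : T -> Prop) (s : seq T) :
  size (seq_sig P s) <= size s.
Proof. by elim: s => //= y s IH; case: pselect => _ //=; apply: leqW. Qed.

Lemma in_seq_sig (T : Type) (P : T -> Prop) (s : seq T) y (Py : P y) :
  List.In y s -> List.In (exist P y Py) (seq_sig P s).
Proof.
move=> ys; apply/List.in_flat_map; exists y; split => //.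
by case: pselect => [Py'|//]; left; apply: proj1_sig_inj.
Qed.

Lemma gmap_ext (G : topGrp) (X Y : gset G) (f g : gmap X Y) :
  (forall x, f x = g x) -> f = g.
Proof.
case: f g => f fE [g gE] /= efg; have eqfg : f = g by apply: funext.
by subst g; rewrite (Prop_irrelevance fE gE).
Qed.

Record group_axioms (G : topGrp) : Prop := GroupAxioms {
  tg_mulA : forall x y z : G, tg_mul x (tg_mul y z) = tg_mul (tg_mul x y) z;
  tg_mul1g : forall x : G, tg_mul (tg_one G) x = x;
  tg_mulVg : forall x : G, tg_mul (tg_inv x) x = tg_one G }.

Lemma pro_oligomorphic_group (G : topGrp) : is_pro_oligomorphic G -> group_axioms G.
Proof. by case=> mulA [mul1g [mulVg _]]; split. Qed.

Section GroupLaws.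
Variables (G : topGrp) (hG : group_axioms G).

Lemma tg_mulgV (x : G) : tg_mul x (tg_inv x) = tg_one G.
Proof.
have [mA m1 mV] := hG.
by rewrite -[tg_mul x _]m1 -(mV (tg_inv x)) -mA [tg_mul (tg_inv x) _]mA mV m1 mV.
Qed.

Lemma tg_mulg1 (x : G) : tg_mul x (tg_one G) = x.
Proof. by rewrite -(tg_mulVg hG x) (tg_mulA hG) tg_mulgV (tg_mul1g hG). Qed.

End GroupLaws.

(** * G-spaces and their orbits *)

(* A [gset] without the finiteness condition on orbits; e.g. [F X * F Y] for non-transitive
   [F X] and [F Y], whose single orbits are [gset]s. *)
Record gspace (G : topGrp) := GSpace {
  sp_car :> Type;
  sp_act : G -> sp_car -> sp_car;
  sp_act1 : forall x, sp_act (tg_one G) x = x;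
  sp_actM : forall g h x, sp_act g (sp_act h x) = sp_act (tg_mul g h) x;
  sp_open_stab : forall x, open [set g | sp_act g x = x] }.
Arguments sp_act {G} T g x : rename.

Definition space_of_gset (G : topGrp) (A : gset G) : gspace G :=
  GSpace (@gs_act1 G A) (@gs_actM G A) (@gs_open_stab G A).
Coercion space_of_gset : gset >-> gspace.

Section GSpaces.
Variable G : topGrp.
Implicit Types (T U : gspace G) (A B : gset G).

Definition equivariant T U (f : T -> U) :=
  forall g t, f (sp_act T g t) = sp_act U g (f t).

Definition orbit_of T (a : T) (x : T) : Prop := exists g, x = sp_act T g a.
Arguments orbit_of : clear implicits.

Definition finite_orbits T :=
  exists s : seq T, forall x, exists y, List.In y s /\ orbit_of T y x.

Definition open_transporters T :=
  forall (x : T) g, open [set h | sp_act T h x = sp_act T g x].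

Definition gset_of_space T (hT : finite_orbits T) : gset G :=
  GSet (@sp_act1 G T) (@sp_actM G T) (@sp_open_stab G T) hT.

Lemma gset_finite_orbits A : finite_orbits A.
Proof. exact: gs_fin_orbits. Qed.

Lemma orbit_of_refl T (a : T) : orbit_of T a a.
Proof. by exists (tg_one G); rewrite sp_act1. Qed.

Lemma orbit_of_act T (a : T) g x : orbit_of T a x -> orbit_of T a (sp_act T g x).
Proof. by case=> h ->; exists (tg_mul g h); rewrite sp_actM. Qed.

Lemma orbit_of_map T U (f : T -> U) (a : T) (b : U) x :
  equivariant f -> orbit_of U b (f a) -> orbit_of T a x -> orbit_of U b (f x).
Proof. by move=> fE fa [g ->]; rewrite fE; apply: orbit_of_act. Qed.

Lemma finite_orbits_image T U (f : T -> U) :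
  equivariant f -> surjective f -> finite_orbits T -> finite_orbits U.
Proof.
move=> fE fS [s hs]; exists (map f s) => y; have [x <-] := fS y.
have [z [zs xz]] := hs x; exists (f z); split; first exact: List.in_map.
exact: (orbit_of_map fE (orbit_of_refl _) xz).
Qed.

Definition prod_space T U : gspace G.
Proof.
refine (@GSpace G (T * U)%type (fun g p => (sp_act T g p.1, sp_act U g p.2)) _ _ _).
- by move=> [x y]; rewrite /= !sp_act1.
- by move=> g h [x y]; rewrite /= !sp_actM.
- move=> [x y]; have -> : [set g | (sp_act T g x, sp_act U g y) = (x, y)] =
    [set g | sp_act T g x = x] `&` [set g | sp_act U g y = y].
    by apply/seteqP; split=> g /=; [case=> -> -> | case=> -> ->].
  by apply: openI; apply: sp_open_stab.
Defined.

Section SubSpace.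
Variables (T : gspace G) (P : T -> Prop).
Hypothesis P_act : forall g x, P x -> P (sp_act T g x).

Definition sub_act g (x : {x : T | P x}) : {x : T | P x} :=
  exist _ (sp_act T g (proj1_sig x)) (P_act g (proj2_sig x)).

Definition sub_space : gspace G.
Proof.
refine (@GSpace G {x : T | P x} sub_act _ _ _).
- by move=> x; apply: proj1_sig_inj; rewrite /= sp_act1.
- by move=> g h x; apply: proj1_sig_inj; rewrite /= sp_actM.
- move=> x; have -> : [set g | sub_act g x = x] =
    [set g | sp_act T g (proj1_sig x) = proj1_sig x].
    apply/seteqP; split=> g /=; first by move/(congr1 (@proj1_sig _ _)).
    by move=> e; apply: proj1_sig_inj.
  exact: sp_open_stab.
Defined.

End SubSpace.

Definition orbit_space T (a : T) := sub_space (@orbit_of_act T a).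
Arguments orbit_space : clear implicits.

Lemma orbit_space_finite T (a : T) : finite_orbits (orbit_space T a).
Proof.
exists [:: exist _ a (orbit_of_refl a)] => -[x [g ex]].
by exists (exist _ a (orbit_of_refl a)); split; [left | exists g; apply: proj1_sig_inj].
Qed.

Definition orbit_gset T (a : T) : gset G := gset_of_space (orbit_space_finite a).
Arguments orbit_gset : clear implicits.

Definition orbit_base T (a : T) : orbit_gset T a := exist _ a (orbit_of_refl a).

Definition orbit_restr T A (f : T -> A) (fE : @equivariant T A f) (a : T) :
  gmap (orbit_gset T a) A :=
  @GMap G (orbit_gset T a) A (fun t => f (proj1_sig t))
    (fun g t => fE g (proj1_sig t)).

Definition orbit_incl A (a : A) : gmap (orbit_gset A a) A :=
  @orbit_restr A A id (fun _ _ => erefl) a.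

Definition orbit_fst A B (p : A * B) : gmap (orbit_gset (prod_space A B) p) A :=
  @orbit_restr (prod_space A B) A fst (fun _ _ => erefl) p.

Definition orbit_snd A B (p : A * B) : gmap (orbit_gset (prod_space A B) p) B :=
  @orbit_restr (prod_space A B) B snd (fun _ _ => erefl) p.

Definition orbit_corestr A T (f : A -> T) (fE : @equivariant A T f) (a : T)
    (fa : forall x, orbit_of T a (f x)) : gmap A (orbit_gset T a) :=
  @GMap G A (orbit_gset T a) (fun x => exist _ (f x) (fa x))
    (fun g x => eq_exist _ _ (fE g x)).

Definition orbit_map T U (f : T -> U) (fE : equivariant f) (a : T) (b : U)
    (fa : orbit_of U b (f a)) : gmap (orbit_gset T a) (orbit_gset U b) :=
  orbit_corestr (f := fun t : orbit_gset T a => f (proj1_sig t))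
    (fun g t => fE g (proj1_sig t))
    (fun t => orbit_of_map fE fa (proj2_sig t)).

End GSpaces.
Arguments orbit_of {G} T a x.
Arguments orbit_gset {G} T a.
Arguments orbit_base {G} T a.

Section GSpaceGroup.
Variables (G : topGrp) (hG : group_axioms G).
Implicit Types (T : gspace G) (A : gset G).

Lemma sp_actK T g : cancel (sp_act T g) (sp_act T (tg_inv g)).
Proof. by move=> x; rewrite sp_actM (tg_mulVg hG) sp_act1. Qed.

Lemma invariant_iff T (P : T -> Prop) : (forall g x, P x -> P (sp_act T g x)) ->
  forall g x, P (sp_act T g x) <-> P x.
Proof.
move=> P_act g x; split; last exact: P_act.
by move/(P_act (tg_inv g)); rewrite sp_actK.
Qed.

Lemma orbit_gset_transitive T (a : T) : transitive_gset (orbit_gset T a).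
Proof.
split; first by exists (orbit_base T a).
move=> [x [g ex]] [y [h ey]]; exists (tg_mul h (tg_inv g)); apply: proj1_sig_inj => /=.
by rewrite ex ey sp_actM -(tg_mulA hG) (tg_mulVg hG) tg_mulg1.
Qed.

Lemma stab_open_subgroup T (x : T) : open_subgroup [set g | sp_act T g x = x].
Proof.
split; first exact: sp_open_stab.
split=> [|g h /= gx hx]; first exact: sp_act1.
by rewrite -sp_actM -{1}hx sp_actK.
Qed.

Section SubGSet.
Variables (A : gset G) (P : A -> Prop).
Hypothesis P_act : forall g x, P x -> P (sp_act A g x).

Lemma sub_space_finite : finite_orbits (@sub_space G A P P_act).
Proof.
have [s hs] := gset_finite_orbits A; exists (seq_sig P s) => -[x Px].
have [y [ys [g exy]]] := hs x.
have Py : P y by have := P_act (tg_inv g) Px; rewrite exy sp_actK.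
by exists (exist P y Py); split; [exact: in_seq_sig | exists g; apply: proj1_sig_inj].
Qed.

Definition sub_gset : gset G := gset_of_space sub_space_finite.

Definition sub_incl : gmap sub_gset A :=
  @GMap G sub_gset A (@proj1_sig _ _) (fun _ _ => erefl).

End SubGSet.
End GSpaceGroup.
Arguments invariant_iff {G} hG T {P}.

(** * Quotients and products *)

Record invariant_equiv (G : topGrp) (T : gspace G) := InvariantEquiv {
  ie_rel :> T -> T -> Prop;
  ie_refl : forall x, ie_rel x x;
  ie_sym : forall x y, ie_rel x y -> ie_rel y x;
  ie_trans : forall x y z, ie_rel x y -> ie_rel y z -> ie_rel x z;
  ie_act : forall g x y, ie_rel x y -> ie_rel (sp_act T g x) (sp_act T g y) }.

Section Quotient.
Variables (G : topGrp) (T : gspace G) (R : invariant_equiv T).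
Hypothesis T_transporters : open_transporters T.

Definition quot_car := {C : T -> Prop | exists x, C = R x}.

Definition quot_class (x : T) : quot_car := exist _ (R x) (ex_intro _ x erefl).

Definition quot_repr (C : quot_car) : T := proj1_sig (cid (proj2_sig C)).

Lemma quot_reprK : cancel quot_repr quot_class.
Proof.
move=> [C hC]; apply: proj1_sig_inj; rewrite /quot_repr /=.
by case: (cid hC) => x /= ->.
Qed.

Lemma quot_classP x y : quot_class x = quot_class y <-> R x y.
Proof.
split=> [/(congr1 (@proj1_sig _ _)) /= ->|Rxy]; first exact: ie_refl.
apply: proj1_sig_inj; apply/funext => z; apply/propext.
by split; apply: ie_trans; first apply: ie_sym.
Qed.

Definition quot_act g C := quot_class (sp_act T g (quot_repr C)).

Lemma quot_act_class g x : quot_act g (quot_class x) = quot_class (sp_act T g x).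
Proof. by apply/quot_classP; apply: ie_act; apply/quot_classP; rewrite quot_reprK. Qed.

(* The stabiliser of the class of [x] is the union of the transporters [[set h | h x = g x]]
   over its elements [g]. *)
Definition quotient_space : gspace G.
Proof.
refine (@GSpace G quot_car quot_act _ _ _).
- by move=> C; rewrite /quot_act sp_act1 quot_reprK.
- by move=> g h C; rewrite -(quot_reprK C) !quot_act_class sp_actM.
- move=> C; have -> : [set g | quot_act g C = C] = \bigcup_(g in [set g | quot_act g C = C])
      [set h | sp_act T h (quot_repr C) = sp_act T g (quot_repr C)].
    apply/seteqP; split=> [g gC | h [g gC /= ehg]]; first by exists g.
    by rewrite /quot_act ehg.
  by apply: bigcup_open => g _; apply: T_transporters.
Defined.

Lemma quot_class_equivariant : @equivariant G T quotient_space quot_class.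
Proof. by move=> g x; rewrite /= quot_act_class. Qed.

Lemma quot_class_surj : surjective quot_class.
Proof. by move=> C; exists (quot_repr C); apply: quot_reprK. Qed.

End Quotient.

Section QuotientGSet.
Variables (G : topGrp) (A : gset G) (R : invariant_equiv A).
Hypothesis A_transporters : open_transporters A.

Definition quotient_gset : gset G :=
  gset_of_space (finite_orbits_image (quot_class_equivariant R A_transporters)
    (@quot_class_surj G A R) (gset_finite_orbits A)).

Definition quotient_map : gmap A quotient_gset :=
  @GMap G A quotient_gset (quot_class R) (quot_class_equivariant R A_transporters).

Lemma quotient_map_surj : surjective quotient_map.
Proof. exact: quot_class_surj. Qed.

Lemma quotient_mapP x y : quotient_map x = quotient_map y <-> R x y.
Proof. exact: quot_classP. Qed.

Lemma quotient_gset_transitive : transitive_gset A -> transitive_gset quotient_gset.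
Proof.
move=> [[a _] trA]; split; first by exists (quotient_map a).
move=> C C'; have [x <-] := quotient_map_surj C; have [x' <-] := quotient_map_surj C'.
by have [g <-] := trA x x'; exists g; rewrite gm_equiv.
Qed.

End QuotientGSet.

Lemma pair_const_continuous (T U : topologicalType) (c : T) :
  continuous (fun y : U => (c, y)).
Proof.
move=> y P /= [[A B] [nA nB] sub]; apply: filterS nB => z Bz.
by apply: sub; split => //=; exact: nbhs_singleton.
Qed.

Lemma open_setX (T U : topologicalType) (A : set T) (B : set U) :
  open A -> open B -> open (A `*` B).
Proof.
rewrite !openE => oA oB [a b] [/= Aa Bb].
by exists (A, B) => //; split; [exact: oA | exact: oB].
Qed.

Section ProOligomorphic.
Variables (G : topGrp) (hG : is_pro_oligomorphic G).
Let hGg := pro_oligomorphic_group hG.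

(* [h x = g x] iff [g^-1 h] stabilises [x], and left translation is continuous. *)
Lemma pro_oligomorphic_open_transporters (T : gspace G) : open_transporters T.
Proof.
have [_ [_ [_ [mul_cont _]]]] := hG; move=> x g.
have -> : [set h | sp_act T h x = sp_act T g x] = (fun h => (tg_inv g, h)) @^-1`
    ((fun p : G * G => tg_mul p.1 p.2) @^-1` [set k | sp_act T k x = x]).
  apply/seteqP; split=> h /= e; first by rewrite -sp_actM e sp_actK.
  by rewrite -[in RHS]e sp_actM (tg_mulA hGg) tg_mulgV // (tg_mul1g hGg).
move: (@pair_const_continuous G G (tg_inv g)) => /continuousP; apply.
by move: mul_cont => /continuousP; apply; apply: sp_open_stab.
Qed.

(* The orbits of [X * Y] correspond to the double cosets [Stab x \ G / Stab y]. *)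
Lemma prod_space_finite (X Y : gset G) :
  transitive_gset X -> transitive_gset Y -> finite_orbits (prod_space X Y).
Proof.
case=> [[x _] tX] [[y _] tY].
have [_ [_ [_ [_ [_ [_ [_ dcoset]]]]]]] := hG.
have [s hs] := dcoset _ _ (@stab_open_subgroup _ hGg X x) (@stab_open_subgroup _ hGg Y y).
exists (map (fun c => (x, sp_act Y c y)) s) => -[x1 y1].
have [g1 <-] := tX x x1; have [g2 <-] := tY y y1.
have [c [cs [u [v [/= ux [/= vy ec]]]]]] := hs (tg_mul (tg_inv g1) g2).
exists (x, sp_act Y c y); split; first exact: List.in_map.
exists (tg_mul g1 u); congr pair => /=; first by rewrite -gs_actM ux.
have [mA _ _] := hGg.
rewrite -[in RHS]vy !gs_actM -!mA (mA u) -ec mA tg_mulgV //.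
by rewrite (tg_mul1g hGg).
Qed.

Definition prod_gset (X Y : gset G) (hX : transitive_gset X) (hY : transitive_gset Y) :=
  gset_of_space (prod_space_finite hX hY).

Definition prod_fst X Y hX hY : gmap (@prod_gset X Y hX hY) X :=
  @GMap G (prod_gset hX hY) X fst (fun _ _ => erefl).

Definition prod_snd X Y hX hY : gmap (@prod_gset X Y hX hY) Y :=
  @GMap G (prod_gset hX hY) Y snd (fun _ _ => erefl).

End ProOligomorphic.

Section ExternalProduct.
Variables (G H : topGrp) (X : gset G) (Y : gset H).
Hypotheses (hX : transitive_gset X) (hY : transitive_gset Y).

Definition ext_prod_space : gspace (prod_topGrp G H).
Proof.
refine (@GSpace (prod_topGrp G H) (X * Y)%type (@prod2_act G H X Y) _ _ _).
- by move=> [x y]; rewrite /prod2_act /= !gs_act1.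
- by move=> [g h] [g' h'] [x y]; rewrite /prod2_act /= !gs_actM.
- move=> [x y]; have -> : [set gh | prod2_act gh (x, y) = (x, y)] =
    [set g | gs_act X g x = x] `*` [set h | gs_act Y h y = y].
    by apply/seteqP; split=> -[g h]; rewrite /prod2_act /= => -[-> ->].
  by apply: open_setX; apply: gs_open_stab.
Defined.

Lemma ext_prod_space_finite : finite_orbits ext_prod_space.
Proof.
case: hX => [[x0 _] tX]; case: hY => [[y0 _] tY].
exists [:: (x0, y0)] => -[x y]; exists (x0, y0); split; first by left.
by have [g <-] := tX x0 x; have [h <-] := tY y0 y; exists (g, h).
Qed.

Definition ext_prod_gset : gset (prod_topGrp G H) := gset_of_space ext_prod_space_finite.

Lemma ext_prod_transitive : transitive_gset ext_prod_gset.
Proof.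
case: hX => [[x0 _] tX]; case: hY => [[y0 _] tY].
split; first by exists (x0, y0).
move=> [x y] [x' y']; have [g <-] := tX x x'; have [h <-] := tY y y'.
by exists (g, h).
Qed.

Lemma ext_prod_open_transporters :
  is_pro_oligomorphic G -> is_pro_oligomorphic H -> open_transporters ext_prod_gset.
Proof.
move=> hG hH [x y] [g h]; have -> :
    [set k | sp_act ext_prod_gset k (x, y) = sp_act ext_prod_gset (g, h) (x, y)] =
    [set k | sp_act X k x = sp_act X g x] `*` [set k | sp_act Y k y = sp_act Y h y].
  by apply/seteqP; split=> -[k1 k2]; rewrite /= /prod2_act /= => -[-> ->].
by apply: open_setX; apply: pro_oligomorphic_open_transporters.
Qed.

End ExternalProduct.

(** * Finite limits and colimits in S(G) *)

Section TrivialGSets.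
Variable G : topGrp.

Definition trivial_space (T : Type) : gspace G.
Proof.
refine (@GSpace G T (fun _ x => x) (fun _ => erefl) (fun _ _ _ => erefl) _).
move=> x; have -> : [set g : G | x = x] = setT by apply/seteqP; split.
exact: openT.
Defined.

Lemma trivial_space_finite (T : Type) (s : seq T) :
  (forall x, List.In x s) -> finite_orbits (trivial_space T).
Proof. by move=> hs; exists s => x; exists x; split => //; exists (tg_one G). Qed.

Definition unit_gset : gset G :=
  gset_of_space (@trivial_space_finite unit [:: tt] (fun 'tt => or_introl erefl)).

Definition bool_gset : gset G :=
  gset_of_space (@trivial_space_finite bool [:: true; false]
    (fun b => if b is true then or_introl erefl else or_intror (or_introl erefl))).

Definition empty_gset : gset G :=
  gset_of_space (@trivial_space_finite False [::] (fun x => match x with end)).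

Definition unit_gmap (A : gset G) : gmap A unit_gset :=
  @GMap G A unit_gset (fun _ => tt) (fun _ _ => erefl).

Definition empty_gmap (A : gset G) : gmap empty_gset A :=
  @GMap G empty_gset A (fun x => match x with end) (fun _ x => match x with end).

Definition const_gmap (A : gset G) (b : bool) : gmap A bool_gset :=
  @GMap G A bool_gset (fun _ => b) (fun _ _ => erefl).

Definition indicator_gmap (A : gset G) (P : A -> Prop)
    (P_act : forall g x, P (sp_act A g x) <-> P x) : gmap A bool_gset :=
  @GMap G A bool_gset (fun x => `[< P x >]) (fun g x => congr1 asbool (propext (P_act g x))).

Lemma unit_gset_terminal : is_terminal unit_gset.
Proof. by move=> X; exists (unit_gmap X) => f x; case: (f x). Qed.

Lemma empty_initial (A : gset G) : (A -> False) -> is_initial A.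
Proof.
move=> A0 X; exists (@GMap G A X (fun x => False_rect _ (A0 x)) (fun _ x => False_rect _ (A0 x))).
by move=> f x; case: (A0 x).
Qed.

Lemma initial_empty (I : gset G) : is_initial I -> I -> False.
Proof. by move=> hI x; have [f _] := hI empty_gset; case: (f x). Qed.

End TrivialGSets.

Section FiniteLimits.
Variables (K : topGrp) (hK : group_axioms K).

Lemma terminal_all_eq (T : gset K) : is_terminal T -> forall a b : T, a = b.
Proof.
move=> hT a b; have [f hf] := hT (orbit_gset (prod_space T T) (a, b)).
have /= fa := hf (orbit_fst (a, b)) (orbit_base (prod_space T T) (a, b)).
have /= fb := hf (orbit_snd (a, b)) (orbit_base (prod_space T T) (a, b)).
exact: etrans fa (esym fb).
Qed.

Lemma pullback_lift (X Y Z P : gset K) (f : gmap X Z) (g : gmap Y Z)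
    (p1 : gmap P X) (p2 : gmap P Y) :
  is_pullback f g p1 p2 -> forall u v, f u = g v -> exists r, p1 r = u /\ p2 r = v.
Proof.
move=> [_ univ] u v fg.
have comm : forall t, f (orbit_fst (u, v) t) = g (orbit_snd (u, v) t).
  by move=> [p [k ep]] /=; rewrite ep /= !gm_equiv fg.
have [w [[w1 w2] _]] := univ _ _ _ comm.
by exists (w (orbit_base (prod_space X Y) (u, v))); rewrite w1 w2.
Qed.

Definition jointly_epi (X Y Q : gset K) (i1 : gmap X Q) (i2 : gmap Y Q) :=
  forall (T : gset K) (a b : gmap Q T), (forall x, a (i1 x) = b (i1 x)) ->
    (forall y, a (i2 y) = b (i2 y)) -> forall q, a q = b q.

Lemma pushout_jointly_epi (X Y Z Q : gset K) (f : gmap Z X) (g : gmap Z Y)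
    (i1 : gmap X Q) (i2 : gmap Y Q) :
  is_pushout f g i1 i2 -> jointly_epi i1 i2.
Proof.
move=> [comm univ] T a b ab1 ab2 q.
have [u [_ uniq]] := univ T (gmap_comp a i1) (gmap_comp a i2) (fun z => congr1 a (comm z)).
have := uniq a (fun _ => erefl) (fun _ => erefl) q.
by have := uniq b (fun x => esym (ab1 x)) (fun y => esym (ab2 y)) q => -> ->.
Qed.

(* Compare the indicator of the joint image with the constant map [true]. *)
Lemma jointly_epi_cover (X Y Q : gset K) (i1 : gmap X Q) (i2 : gmap Y Q) :
  jointly_epi i1 i2 -> forall q, (exists x, i1 x = q) \/ (exists y, i2 y = q).
Proof.
move=> epi q; pose P q := (exists x, i1 x = q) \/ (exists y, i2 y = q).
have P_act : forall k q, P q -> P (sp_act Q k q).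
  move=> k _ [[x <-]|[y <-]]; [left; exists (gs_act X k x)|right; exists (gs_act Y k y)];
  exact: gm_equiv.
apply/(@asboolP (P q)).
apply: (epi _ (indicator_gmap (invariant_iff hK Q P_act)) (const_gmap Q true))
  => [x|y]; apply/asboolP; [left|right]; eexists; reflexivity.
Qed.

Lemma pushout_self_surj (A B : gset K) (f : gmap A B) :
  surjective f -> is_pushout f f (gmap_id B) (gmap_id B).
Proof.
move=> fS; split=> // T a b ab; exists a; split.
  by split=> // y; have [x <-] := fS y; apply: ab.
by move=> u ua _ y; apply: ua.
Qed.

Section Complement.
Variables (A : gset K) (D : A -> Prop).
Hypothesis D_act : forall k x, D x -> D (sp_act A k x).

Lemma compl_act k x : ~ D x -> ~ D (sp_act A k x).
Proof. by move=> nDx /(invariant_iff hK A D_act). Qed.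

Lemma sub_compl_pushout :
  is_pushout (empty_gmap (sub_gset hK D_act)) (empty_gmap (sub_gset hK compl_act))
    (sub_incl hK D_act) (sub_incl hK compl_act).
Proof.
split=> [[]|T a b _].
pose u x := match pselect (D x) with
  | left Dx => a (exist _ x Dx) | right nDx => b (exist _ x nDx) end.
have uE : forall k x, u (gs_act A k x) = gs_act T k (u x).
  move=> k x; rewrite /u; case: pselect => Dkx; case: pselect => Dx.
  - by rewrite -gm_equiv; congr (a _); apply: proj1_sig_inj.
  - by case: Dx; apply: (invariant_iff hK A D_act k x).1.
  - by case: Dkx; apply: D_act.
  - by rewrite -gm_equiv; congr (b _); apply: proj1_sig_inj.
exists (GMap uE); split.
  split=> -[x hx] /=; rewrite /u; case: pselect => // h.
  - by congr (a _); apply: proj1_sig_inj.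
  - by congr (b _); apply: proj1_sig_inj.
move=> u' ua ub x /=; rewrite /u; case: pselect => h.
  by rewrite -(ua (exist _ x h)).
by rewrite -(ub (exist _ x h)).
Qed.

End Complement.

End FiniteLimits.

(** * Exact functors *)

Lemma F_map_comp_ext (G K : topGrp) (F : functor G K) (A B C : gset G)
    (f : gmap A B) (g : gmap B C) (h : gmap A C) :
  (forall x, g (f x) = h x) -> forall w, F_map F g (F_map F f w) = F_map F h w.
Proof. by move=> e w; rewrite -F_map_comp; congr (F_map F _ _); apply: gmap_ext. Qed.

Lemma F_map_commute (G K : topGrp) (F : functor G K) (A B B' C : gset G)
    (f : gmap A B) (g : gmap B C) (f' : gmap A B') (g' : gmap B' C) :
  (forall x, g (f x) = g' (f' x)) ->
  forall w, F_map F g (F_map F f w) = F_map F g' (F_map F f' w).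
Proof.
by move=> e w; rewrite -!F_map_comp; congr (F_map F _ _); apply: gmap_ext.
Qed.

Lemma prod_pullback (G : topGrp) (hG : is_pro_oligomorphic G) (X Y : gset G)
    (hX : transitive_gset X) (hY : transitive_gset Y) :
  is_pullback (unit_gmap X) (unit_gmap Y) (prod_fst hG hX hY) (prod_snd hG hX hY).
Proof.
split=> // T a b _.
have abE : forall g t, ((a (gs_act T g t), b (gs_act T g t)) : prod_gset hG hX hY) =
    gs_act (prod_gset hG hX hY) g (a t, b t).
  by move=> g t; rewrite !gm_equiv.
exists (GMap abE); split => // u' u1 u2 t /=.
by rewrite -u1 -u2; case: (u' t).
Qed.

Section ExactFunctor.
Variables (G K : topGrp) (hG : is_pro_oligomorphic G) (hK : is_pro_oligomorphic K).
Variables (F : functor G K) (hF : exact_functor F).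
Let hGg := pro_oligomorphic_group hG.
Let hKg := pro_oligomorphic_group hK.

Lemma exact_surj (A B : gset G) (f : gmap A B) : surjective f -> surjective (F_map F f).
Proof.
move=> /pushout_self_surj Fpo; have [_ [_ /(_ _ _ _ _ _ _ _ _ Fpo) [_ univ]]] := hF.
suff epi : jointly_epi (F_map F f) (F_map F f).
  by move=> y; case: (jointly_epi_cover hKg epi y).
move=> T a b ab _ y; have [u [[ua ub] _]] := univ T a b ab.
by rewrite -ua ub.
Qed.

Lemma exact_sub_compl_cover (A : gset G) (D : A -> Prop)
    (D_act : forall g x, D x -> D (sp_act A g x)) (w : F A) :
  (exists w1, F_map F (sub_incl hGg D_act) w1 = w) \/
  (exists w2, F_map F (sub_incl hGg (compl_act hGg D_act)) w2 = w).
Proof.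
have [_ [_ Fpo]] := hF.
by have := jointly_epi_cover hKg (pushout_jointly_epi (Fpo _ _ _ _ _ _ _ _
  (sub_compl_pushout hGg D_act))) w.
Qed.

Lemma exact_prod_surj (X Y : gset G) (hX : transitive_gset X) (hY : transitive_gset Y)
    (u : F X) (v : F Y) :
  exists w, F_map F (prod_fst hG hX hY) w = u /\ F_map F (prod_snd hG hX hY) w = v.
Proof.
have [[Fterm Fpb] _] := hF.
apply: (pullback_lift (Fpb _ _ _ _ _ _ _ _ (prod_pullback hG hX hY))).
by move: (Fterm _ (@unit_gset_terminal G)) => /terminal_all_eq; apply.
Qed.

Lemma exact_empty (A : gset G) : (A -> False) -> F A -> False.
Proof. by move=> A0; have [_ [Finit _]] := hF; apply/initial_empty/Finit/empty_initial. Qed.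

(* Split off the orbit of the first representative; its complement has fewer orbits. *)
Lemma exact_orbit_cover_size n (A : gset G) (s : seq A) : size s <= n ->
  (forall x, exists y, List.In y s /\ orbit_of A y x) ->
  forall w : F A, exists a (w' : F (orbit_gset A a)), F_map F (orbit_incl a) w' = w.
Proof.
elim: n A s => [|n IH] A [|a s] //= sz hs w;
  try by case: (exact_empty _ w) => x; have [? []] := hs x.
pose D := orbit_of A a.
have [[w1 <-]|[w2 <-]] := exact_sub_compl_cover (@orbit_of_act G A a) w.
  exists a, (F_map F (@orbit_corestr G (sub_gset hGg (@orbit_of_act G A a)) A
    (@proj1_sig _ D) (fun _ _ => erefl) a (@proj2_sig _ D)) w1).
  exact: F_map_comp_ext.
pose Ac := sub_gset hGg (compl_act hGg (@orbit_of_act G A a)).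
have hs' : forall x : Ac, exists y, List.In y (seq_sig (fun x => ~ D x) s) /\ orbit_of Ac y x.
  move=> [x nDx]; have [y [ys [g exy]]] := hs x.
  have nDy : ~ D y by move=> [h eh]; apply: nDx; exists (tg_mul g h); rewrite exy eh sp_actM.
  exists (exist _ y nDy); split; last by exists g; apply: proj1_sig_inj.
  by apply: in_seq_sig; case: ys => // eay; case: nDx; exists g; rewrite exy eay.
have [b [w3 <-]] := IH Ac _ (leq_trans (size_seq_sig _ _) sz) hs' w2.
exists (proj1_sig b), (F_map F (@orbit_map G Ac A (@proj1_sig _ _) (fun _ _ => erefl)
  b _ (orbit_of_refl (proj1_sig b))) w3).
exact: F_map_commute.
Qed.

Lemma exact_orbit_cover (A : gset G) (w : F A) :
  exists a (w' : F (orbit_gset A a)), F_map F (orbit_incl a) w' = w.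
Proof. by have [s hs] := gset_finite_orbits A; apply: (exact_orbit_cover_size (leqnn _) hs). Qed.

End ExactFunctor.

(** * Orbitals *)

Section KernelPair.
Variables (G : topGrp) (hG : is_pro_oligomorphic G).
Variables (X : gset G) (hX : transitive_gset X) (R : invariant_equiv X).
Let hGg := pro_oligomorphic_group hG.
Let hXt := @pro_oligomorphic_open_transporters G hG X.

Lemma kernel_act g (p : prod_gset hG hX hX) :
  R p.1 p.2 -> R (sp_act (prod_gset hG hX hX) g p).1 (sp_act (prod_gset hG hX hX) g p).2.
Proof. exact: ie_act. Qed.

Definition kernel_gset := sub_gset hGg kernel_act.

Definition kernel_fst : gmap kernel_gset X :=
  gmap_comp (prod_fst hG hX hX) (sub_incl hGg kernel_act).

Definition kernel_snd : gmap kernel_gset X :=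
  gmap_comp (prod_snd hG hX hX) (sub_incl hGg kernel_act).

Lemma kernel_pullback :
  is_pullback (quotient_map R hXt) (quotient_map R hXt) kernel_fst kernel_snd.
Proof.
split=> [[[x y] /= Rxy]|T a b ab]; first exact/quotient_mapP.
have Rab t : R (a t) (b t) by apply/quotient_mapP/ab.
have abE : forall g t, (exist _ (a (gs_act T g t), b (gs_act T g t)) (Rab _) : kernel_gset) =
    gs_act kernel_gset g (exist _ (a t, b t) (Rab t)).
  by move=> g t; apply: proj1_sig_inj; rewrite /= !gm_equiv.
exists (GMap abE); split=> // u ua ub t; apply: proj1_sig_inj => /=.
by rewrite -ua -ub; apply: surjective_pairing.
Qed.

End KernelPair.

Section Orbitals.
Variables (G K : topGrp) (hG : is_pro_oligomorphic G) (hK : is_pro_oligomorphic K).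
Variables (F : functor G K) (hF : exact_functor F).
Variables (X : gset G) (hX : transitive_gset X).

Definition orbital (a : X * X) : gset G := orbit_gset (prod_space X X) a.

Definition orbital_rel (a : X * X) (u u' : F X) :=
  exists w : F (orbital a), F_map F (orbit_fst a) w = u /\ F_map F (orbit_snd a) w = u'.

Lemma orbital_rel_total u u' : exists a, orbital_rel a u u'.
Proof.
have [w [wu wu']] := exact_prod_surj hG hF hX hX u u'.
have [a [w' ew]] := exact_orbit_cover hG hK hF w.
by exists a, w'; rewrite -wu -wu' -ew; split; symmetry; apply: F_map_comp_ext.
Qed.

Lemma orbital_rel_diag_eq x u u' : orbital_rel (x, x) u u' -> u = u'.
Proof.
move=> [w [<- <-]]; congr (F_map F _ _); apply: gmap_ext => -[p [g ep]].
by rewrite /= ep.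
Qed.

Lemma orbital_rel_diag x u : orbital_rel (x, x) u u.
Proof.
have diag_orbit y : orbit_of (prod_space X X) (x, x) (y, y).
  by have [_ tX] := hX; have [g <-] := tX x y; exists g.
pose d := @orbit_corestr G X (prod_space X X) (fun y => (y, y)) (fun _ _ => erefl) _ diag_orbit.
by exists (F_map F d u); rewrite !(F_map_comp_ext (h := gmap_id X)) // F_map_id.
Qed.

Lemma orbital_rel_swap x x' u u' : orbital_rel (x, x') u u' -> orbital_rel (x', x) u' u.
Proof.
pose m := @orbit_map G (prod_space X X) (prod_space X X) (fun p => (p.2, p.1))
  (fun _ _ => erefl) (x, x') (x', x) (orbit_of_refl _).
by move=> [w [wu wu']]; exists (F_map F m w); rewrite -wu -wu'; split; apply: F_map_comp_ext.
Qed.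

Lemma orbital_rel_act (a : X * X) g u u' :
  orbital_rel (sp_act (prod_space X X) g a) u u' -> orbital_rel a u u'.
Proof.
pose m := @orbit_map G (prod_space X X) (prod_space X X) id
  (fun _ _ => erefl) (sp_act (prod_space X X) g a) a (ex_intro _ g erefl).
by move=> [w [wu wu']]; exists (F_map F m w); rewrite -wu -wu'; split; apply: F_map_comp_ext.
Qed.

(* Lift an [(x1, x3)]-witness to the orbit of the triple [(x1, x2, x3)]. *)
Lemma orbital_rel_split x1 x2 x3 u u'' : orbital_rel (x1, x3) u u'' ->
  exists u', orbital_rel (x1, x2) u u' /\ orbital_rel (x2, x3) u' u''.
Proof.
move=> [w [wu wu'']].
pose XXX := prod_space (prod_space X X) X.
pose t0 : XXX := ((x1, x2), x3).
pose f13 := @orbit_map G XXX (prod_space X X) (fun p => (p.1.1, p.2)) (fun _ _ => erefl)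
  t0 (x1, x3) (orbit_of_refl _).
pose f12 := @orbit_map G XXX (prod_space X X) fst (fun _ _ => erefl)
  t0 (x1, x2) (orbit_of_refl _).
pose f23 := @orbit_map G XXX (prod_space X X) (fun p => (p.1.2, p.2)) (fun _ _ => erefl)
  t0 (x2, x3) (orbit_of_refl _).
have f13_surj : surjective f13.
  move=> [p [g ep]]; exists (exist _ (sp_act XXX g t0) (ex_intro _ g erefl)).
  by apply: proj1_sig_inj; rewrite /= ep.
have [t et] := exact_surj hK hF f13_surj w.
exists (F_map F (orbit_snd (x1, x2)) (F_map F f12 t)); split.
  by exists (F_map F f12 t); split; rewrite // -wu -et; apply: F_map_commute.
exists (F_map F f23 t); split; first by apply: F_map_commute.
by rewrite -wu'' -et; apply: F_map_commute.
Qed.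

Section OrbitalQuotient.
Variables (C : Type) (k : F X -> C).

Definition orbital_lift (x x' : X) := forall u u', orbital_rel (x, x') u u' -> k u = k u'.

Definition orbital_lift_equiv : invariant_equiv X.
Proof.
refine (@InvariantEquiv G X orbital_lift _ _ _ _).
- by move=> x u u' /orbital_rel_diag_eq ->.
- by move=> x x' Ex u u' /orbital_rel_swap /Ex.
- move=> x1 x2 x3 E12 E23 u u'' /(orbital_rel_split x2) [u' [/E12 -> /E23]].
  exact.
- by move=> g x x' Ex u u' /(@orbital_rel_act (x, x')) /Ex.
Defined.

Hypothesis k_saturated :
  forall x x' u u', orbital_rel (x, x') u u' -> k u = k u' -> orbital_lift x x'.

Let hXt := @pro_oligomorphic_open_transporters G hG X.

Definition orbital_quotient := quotient_gset orbital_lift_equiv hXt.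

Definition orbital_quotient_map : gmap X orbital_quotient := quotient_map orbital_lift_equiv hXt.

Lemma exact_orbital_quotient_kernel u u' :
  F_map F orbital_quotient_map u = F_map F orbital_quotient_map u' <-> k u = k u'.
Proof.
split=> [|Euu'].
  have [[_ Fpb] _] := hF; move/(pullback_lift (Fpb _ _ _ _ _ _ _ _ (kernel_pullback hG hX _))).
  move=> [r [<- <-]]; have [[[x x'] Exx'] [r' <-]] := exact_orbit_cover hG hK hF r.
  apply: (Exx'); exists (F_map F (@orbit_map G (kernel_gset hG hX orbital_lift_equiv)
    (prod_space X X) (@proj1_sig _ _) (fun _ _ => erefl) (exist _ (x, x') Exx') (x, x')
    (orbit_of_refl _)) r').
  by split; apply: F_map_commute.
have [[x x'] [w [wu wu']]] := orbital_rel_total u u'.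
have Exx' := k_saturated (ex_intro _ w (conj wu wu')) Euu'.
rewrite -wu -wu'; apply: F_map_commute => -[p [g ep]] /=; rewrite ep.
by apply/(@quotient_mapP G X orbital_lift_equiv hXt); apply: ie_act.
Qed.

End OrbitalQuotient.

End Orbitals.
Arguments orbital_rel {G K} F {X} a u u'.

(** * The kernel of [q] *)

Lemma iso_of_same_kernel (K P Z W : Type) (actP : K -> P -> P) (actZ : K -> Z -> Z)
    (actW : K -> W -> W) (q : P -> Z) (phi : P -> W) :
  surjective q -> surjective phi -> (forall p p', q p = q p' <-> phi p = phi p') ->
  (forall k p, q (actP k p) = actZ k (q p)) -> (forall k p, phi (actP k p) = actW k (phi p)) ->
  exists e : Z -> W, bijective e /\ forall k z, e (actZ k z) = actW k (e z).
Proof.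
move=> qS phiS ker qE phiE.
pose q' z := proj1_sig (cid (qS z)).
have q'K z : q (q' z) = z by rewrite /q'; case: cid.
pose phi' w := proj1_sig (cid (phiS w)).
have phi'K w : phi (phi' w) = w by rewrite /phi'; case: cid.
exists (fun z => phi (q' z)); split.
  exists (fun w => q (phi' w)) => [z|w].
    by rewrite -[RHS]q'K; apply/ker; rewrite phi'K.
  by rewrite -[RHS]phi'K; apply/ker; rewrite q'K.
move=> k z; rewrite -phiE; apply/ker.
by rewrite qE !q'K.
Qed.

Section SplitEquivalence.
Variables (G H : topGrp) (hG : is_pro_oligomorphic G) (hH : is_pro_oligomorphic H).
Hypothesis hsplit : split_group G.
Variables (X : gset G) (Y : gset H) (hX : transitive_gset X) (hY : transitive_gset Y).
Variable S : invariant_equiv (ext_prod_gset hX hY).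

(* In [X * Y / S], which is [X2 * Y2] by splitness, the [X2]-coordinate does not depend on [y]
   and the [Y2]-coordinate does not depend on [x]. *)
Lemma split_equiv_rect x y x' y' :
  S (x, y) (x', y') -> S (x, y) (x', y) /\ S (x, y) (x, y').
Proof.
have hT := @ext_prod_open_transporters G H X Y hX hY hG hH.
pose pi := quotient_map S hT.
have [X2 [Y2 [_ [_ [e [e_bij eE]]]]]] :=
  hsplit hH (@quotient_gset_transitive _ _ S hT (@ext_prod_transitive G H X Y hX hY)).
pose c1 x y := (e (pi (x, y))).1; pose c2 x y := (e (pi (x, y))).2.
have [[_ tX] [_ tY]] := (hX, hY).
have c1E x1 y1 y2 : c1 x1 y1 = c1 x1 y2.
  have [h <-] := tY y1 y2; rewrite /c1.
  have -> : ((x1, gs_act Y h y1) : ext_prod_gset hX hY) =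
      gs_act (ext_prod_gset hX hY) ((tg_one G, h) : prod_topGrp G H) (x1, y1).
    by rewrite /= /prod2_act /= gs_act1.
  by rewrite gm_equiv eE /prod2_act /= gs_act1.
have c2E x1 x2 y1 : c2 x1 y1 = c2 x2 y1.
  have [g <-] := tX x1 x2; rewrite /c2.
  have -> : ((gs_act X g x1, y1) : ext_prod_gset hX hY) =
      gs_act (ext_prod_gset hX hY) ((g, tg_one H) : prod_topGrp G H) (x1, y1).
    by rewrite /= /prod2_act /= gs_act1.
  by rewrite gm_equiv eE /prod2_act /= gs_act1.
have piP p p' : e (pi p) = e (pi p') <-> S p p'.
  rewrite -(quotient_mapP S hT); split=> [/(bij_inj e_bij)|->] //.
have pairE x1 y1 : e (pi (x1, y1)) = (c1 x1 y1, c2 x1 y1) by rewrite -surjective_pairing.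
move=> /piP e12; have [e1 e2] : c1 x y = c1 x' y' /\ c2 x y = c2 x' y' by rewrite /c1 /c2 e12.
split; apply/piP; rewrite !pairE; congr pair.
- exact: etrans e1 (c1E x' y' y).
- exact: c2E.
- exact: c1E.
- exact: etrans e2 (c2E x' x y').
Qed.

End SplitEquivalence.

Section ProductQuotient.
Variables (G H K : topGrp).
Hypotheses (hG : is_pro_oligomorphic G) (hH : is_pro_oligomorphic H)
  (hK : is_pro_oligomorphic K) (hsplit : split_group G).
Variables (Phi : functor G K) (Psi : functor H K).
Hypotheses (hPhi : exact_functor Phi) (hPsi : exact_functor Psi).
Hypothesis htrans : forall (X : gset G) (Y : gset H), transitive_gset X ->
  transitive_gset Y -> transitive_action (@prod_act K (Phi X) (Psi Y)).
Variables (X : gset G) (Y : gset H) (hX : transitive_gset X) (hY : transitive_gset Y).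
Variables (Z : gset K) (q : Phi X * Psi Y -> Z).
Hypothesis hq_equiv : forall k p, q (prod_act k p) = gs_act Z k (q p).

Definition q_left (u : Phi X) v := q (u, v).
Definition q_right (v : Psi Y) u := q (u, v).

Definition q_block (a : X * X) (b : Y * Y) := forall u u' v v',
  orbital_rel Phi a u u' -> orbital_rel Psi b v v' -> q (u, v) = q (u', v').

(* [Phi (orbital a) * Psi (orbital b)] is transitive, and [q] is equivariant. *)
Lemma q_block_of_pair a b u0 u0' v0 v0' :
  orbital_rel Phi a u0 u0' -> orbital_rel Psi b v0 v0' -> q (u0, v0) = q (u0', v0') ->
  q_block a b.
Proof.
move=> [w [<- <-]] [w' [<- <-]] e0 u u' v v' [w1 [<- <-]] [w1' [<- <-]].
have [_ tr] := htrans (@orbit_gset_transitive _ (pro_oligomorphic_group hG) (prod_space X X) a)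
  (@orbit_gset_transitive _ (pro_oligomorphic_group hH) (prod_space Y Y) b).
have [k [<- <-]] := tr (w, w') (w1, w1').
by rewrite !gm_equiv -[(_, _)]/(prod_act k (_, _)) hq_equiv e0 -hq_equiv.
Qed.

Lemma q_left_saturated x x' u u' : orbital_rel Phi (x, x') u u' ->
  q_left u = q_left u' -> orbital_lift q_left x x'.
Proof.
have [[[_ v0] _] _] := htrans hX hY; have [[y0 _] _] := hY.
move=> hu /(congr1 (fun f => f v0)) e0 u1 u1' hu1; apply/funext => v.
exact: q_block_of_pair hu (orbital_rel_diag hY y0 v0) e0 _ _ _ _ hu1 (orbital_rel_diag hY y0 v).
Qed.

Lemma q_right_saturated y y' v v' : orbital_rel Psi (y, y') v v' ->
  q_right v = q_right v' -> orbital_lift q_right y y'.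
Proof.
have [[[u0 _] _] _] := htrans hX hY; have [[x0 _] _] := hX.
move=> hv /(congr1 (fun f => f u0)) e0 v1 v1' hv1; apply/funext => u.
exact: q_block_of_pair (orbital_rel_diag hX x0 u0) hv e0 _ _ _ _ (orbital_rel_diag hX x0 u) hv1.
Qed.

Definition block_equiv : invariant_equiv (ext_prod_gset hX hY).
Proof.
refine (@InvariantEquiv _ (ext_prod_gset hX hY)
  (fun p p' => q_block (p.1, p'.1) (p.2, p'.2)) _ _ _ _).
- by move=> p u u' v v' /orbital_rel_diag_eq -> /orbital_rel_diag_eq ->.
- by move=> p p' Sp u u' v v' /orbital_rel_swap hu /orbital_rel_swap /(Sp _ _ _ _ hu) ->.
- move=> p1 p2 p3 S12 S23 u u'' v v''.
  move=> /(orbital_rel_split hK hPhi p2.1) [u' [hu1 hu2]].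
  move=> /(orbital_rel_split hK hPsi p2.2) [v' [hv1 hv2]].
  by rewrite (S12 _ _ _ _ hu1 hv1) (S23 _ _ _ _ hu2 hv2).
- move=> [g h] [x y] [x' y'] Sp u u' v v' hu hv.
  exact: Sp _ _ _ _ (orbital_rel_act (a := (x, x')) hu) (orbital_rel_act (a := (y, y')) hv).
Defined.

(* Cover [(u, u')] and [(v, v')] by orbitals [a] and [b]; then [q_block a b], and by splitness
   also [q_block (a.1, a.2) (b.1, b.1)] and [q_block (a.1, a.1) (b.1, b.2)]. *)
Lemma q_kernel u v u' v' :
  q (u, v) = q (u', v') <-> q_left u = q_left u' /\ q_right v = q_right v'.
Proof.
split=> [e|[/(congr1 (fun f => f v)) e1 /(congr1 (fun f => f u')) e2]]; last first.
  by rewrite -[LHS]/(q_left u v) e1.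
have [[x x'] hu] := orbital_rel_total hG hK hPhi hX u u'.
have [[y y'] hv] := orbital_rel_total hH hK hPsi hY v v'.
have /(split_equiv_rect hG hH hsplit) [Sx Sy] :
  block_equiv (x, y) (x', y') := q_block_of_pair hu hv e.
split; apply/funext.
- by move=> v1; apply: (Sx u u' v1 v1 hu (orbital_rel_diag hY y v1)).
- by move=> u1; apply: (Sy u1 u1 v v' (orbital_rel_diag hX x u1) hv).
Qed.

End ProductQuotient.

Theorem proposition5p7 (G H K : topGrp)
  (hG : is_pro_oligomorphic G) (hH : is_pro_oligomorphic H)
  (hK : is_pro_oligomorphic K) (hsplit : split_group G)
  (Phi : functor G K) (Psi : functor H K)
  (hPhi : exact_functor Phi) (hPsi : exact_functor Psi)
  (htrans : forall (X : gset G) (Y : gset H), transitive_gset X -> transitive_gset Y ->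
     transitive_action (@prod_act K (Phi X) (Psi Y)))
  (X : gset G) (Y : gset H) (hX : transitive_gset X) (hY : transitive_gset Y)
  (Z : gset K) (q : Phi X * Psi Y -> Z)
  (hq_surj : forall z : Z, exists p, q p = z)
  (hq_equiv : forall k p, q (prod_act k p) = gs_act Z k (q p)) :
  exists (X' : gset G) (pX : gmap X X'),
    (forall x' : X', exists x, pX x = x') /\
  exists (Y' : gset H) (pY : gmap Y Y'),
    (forall y' : Y', exists y, pY y = y') /\
  exists e : Z -> Phi X' * Psi Y', bijective e /\
    forall k z, e (gs_act Z k z) = prod_act k (e z).
Proof.
have kerq := q_kernel hG hH hK hsplit hPhi hPsi htrans hX hY hq_equiv.
have kerX := exact_orbital_quotient_kernel hG hK hPhi hX
  (q_left_saturated hG hH htrans hX hY hq_equiv).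
have kerY := exact_orbital_quotient_kernel hH hK hPsi hY
  (q_right_saturated hG hH htrans hX hY hq_equiv).
pose pX := orbital_quotient_map hG hK hPhi (q_left q).
pose pY := orbital_quotient_map hH hK hPsi (q_right q).
exists _, pX; split; first exact: quotient_map_surj.
exists _, pY; split; first exact: quotient_map_surj.
apply: (iso_of_same_kernel (phi := fun p => (F_map Phi pX p.1, F_map Psi pY p.2))
  hq_surj _ _ hq_equiv).
- move=> [u' v'].
  have [u <-] := exact_surj hK hPhi (@quotient_map_surj _ _ _ _) u'.
  have [v <-] := exact_surj hK hPsi (@quotient_map_surj _ _ _ _) v'.
  by exists (u, v).
- move=> [u v] [u' v']; rewrite kerq -kerX -kerY /=.
  by split=> [[-> ->] | [-> ->]].
- by move=> k [u v]; rewrite /prod_act /= !gm_equiv.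
Qed.
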